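(* Let $J>0$, $h\ne0$, $\rho>0$, and $\varepsilon\in\mathcal{E}_{h,\rho}$. Let $f:\mathbb{R}^N\to\mathbb{R}$ be integrable with $\langle|f|\rangle_{\mathrm{MC}}^{m_\pm,\rho;N}\le K$ for some $K\ge0$ whenever these ensembles are defined. Then \[ \left|\langle f\rangle_{\mathrm{MC}}^{\varepsilon,\rho;N}-\langle f\rangle_{\mathrm{MC}}^{m,\rho;N}\right|\le2K\left|\frac{\rho-\left(\frac{|h|}J+\sqrt{\frac{h^2}{J^2}-\frac{2\varepsilon}J}\right)^2}{\rho-\left(\frac{|h|}J-\sqrt{\frac{h^2}{J^2}-\frac{2\varepsilon}J}\right)^2}\right|^{\frac{N-3}2}, \] where $m=-\frac hJ+\mathrm{sgn}(h)\sqrt{\frac{h^2}{J^2}-\frac{2\varepsilon}J}$. In addition, $\langle f\rangle_{\mathrm{MC}}^{\varepsilon,\rho;N}=\langle f\rangle_{\mathrm{MC}}^{m,\rho;N}+O(e^{-cN})$ for some constant $c>0$.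
   Context: Mean-field spherical model: $\Lambda$ finite lattice, $N=|\Lambda|$, fields $\phi\in\mathbb{R}^\Lambda\cong\mathbb{R}^N$, $J>0$, $h\in\mathbb{R}$, energy $H[\phi]=-\frac J{2N}(\sum_x\phi_x)^2-h\sum_x\phi_x$, particle number $\sum_x\phi_x^2$. For $\rho>0$, $|m|<\sqrt\rho$, $\mu_{\mathrm{MC}}^{m,\rho;N}$ is the normalized uniform surface measure on the $(N-2)$-sphere $\{\sum_x\phi_x=mN,\ \sum_x\phi_x^2=\rho N\}$, and $Z_{\mathrm{MC}}(m,\rho;N)=(\rho-m^2)^{(N-3)/2}$. For $\varepsilon\le\frac{h^2}{2J}$ set $m_\pm=-\frac hJ\pm\sqrt{\frac{h^2}{J^2}-\frac{2\varepsilon}J}$. Fixed energy ensemble: if $\varepsilon<\frac{h^2}{2J}$ and $m_+^2,m_-^2<\rho$, $\langle f\rangle_{\mathrm{MC}}^{\varepsilon,\rho;N}=\sum_{\pm}\frac{Z_{\mathrm{MC}}(m_\pm,\rho;N)}{Z_{\mathrm{MC}}(m_+,\rho;N)+Z_{\mathrm{MC}}(m_-,\rho;N)}\langle f\rangle_{\mathrm{MC}}^{m_\pm,\rho;N}$; if $\varepsilon<\frac{h^2}{2J}$ and $\min(m_-^2,m_+^2)<\rho\le\max(m_-^2,m_+^2)$, it equals $\langle f\rangle_{\mathrm{MC}}^{m',\rho;N}$ with $m'$ the one of $m_\pm$ of smaller absolute value; if $\varepsilon=\frac{h^2}{2J}$ and $\rho>\frac{h^2}{J^2}$, it equals $\langle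 f\rangle_{\mathrm{MC}}^{-h/J,\rho;N}$. The set of allowed energies is $\mathcal{E}_{h,\rho}=\{\varepsilon\le\frac{h^2}{2J}:\ |\frac{|h|}J-\sqrt{\frac{h^2}{J^2}-\frac{2\varepsilon}J}|<\sqrt\rho\}$. $O(\cdot)$ refers to $N\to\infty$. *)

From HB Require Import structures.
From mathcomp Require Import all_boot all_order all_algebra.
From mathcomp Require Import all_classical all_reals all_analysis.
Unset Printing Implicit Defensive.
Import Order.TTheory GRing.Theory Num.Theory.
Local Open Scope classical_set_scope.
Local Open Scope ring_scope.

(** Field configurations phi : R^Lambda, with |Lambda| = N, indexed by 'I_N. *)
(** Cylinder sets {phi | phi_i \in A}, A Borel in R; they generate the
    product (= Borel) sigma-algebra on R^N. *)
Definition cfg (R : realType) (N : nat) := 'I_N -> R.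
HB.instance Definition _ (R : realType) (N : nat) := Choice.on (cfg R N).
HB.instance Definition _ (R : realType) (N : nat) :=
  isPointed.Build (cfg R N) (fun _ => 0%R).

Definition cylinders (R : realType) (N : nat) : set (set (cfg R N)) :=
  [set B | exists (i : 'I_N) (A : set R), measurable A /\
           B = (fun phi : cfg R N => phi i) @^-1` A].

Definition RN (R : realType) (N : nat) := g_sigma_algebraType (cylinders R N).

Definition mc_sphere {R : realType} (N : nat) (m rho : R) : set (RN R N) :=
  [set phi : 'I_N -> R | \sum_(i < N) phi i = m * N%:R /\
                         \sum_(i < N) phi i ^+ 2 = rho * N%:R].

Definition mx_act {R : realType} {N : nat} (M : 'M[R]_N) (phi : RN R N) : RN R N :=
  fun i => \sum_(j < N) M i j * phi j.

(** Orthogonal transformations of R^N fixing the vector (1,...,1): these are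
    exactly the isometries of R^N mapping the sphere mc_sphere m rho onto itself
    (fixing its centre m(1,..,1)); they act transitively on it. *)
Definition sphere_symmetry {R : realType} {N : nat} (M : 'M[R]_N) : Prop :=
  M *m M^T = 1%:M /\ forall i : 'I_N, \sum_(j < N) M i j = 1.

(** mu is the normalized uniform surface measure on mc_sphere m rho:
    a probability measure concentrated on the sphere and invariant under the
    symmetry group of the sphere (the uniform measure is the unique such
    probability measure). *)
Definition is_uniform_MC {R : realType} (N : nat) (m rho : R)
    (mu : probability (RN R N) R) : Prop :=
  mu (mc_sphere N m rho) = 1%E /\
  forall M : 'M[R]_N, sphere_symmetry M ->
    forall A : set (RN R N), measurable A -> mu (mx_act M @^-1` A) = mu A.

Definition avgMC {R : realType} {N : nat} (mu : probability (RN R N) R)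
    (f : RN R N -> R) : R := Rintegral mu setT f.

Definition ZMC {R : realType} (m rho : R) (N : nat) : R :=
  powR (rho - m ^+ 2) ((N%:R - 3) / 2).

Definition m_plus {R : realType} (J h eps : R) : R :=
  - (h / J) + Num.sqrt (h ^+ 2 / J ^+ 2 - 2 * eps / J).
Definition m_minus {R : realType} (J h eps : R) : R :=
  - (h / J) - Num.sqrt (h ^+ 2 / J ^+ 2 - 2 * eps / J).

Definition allowed_energy {R : realType} (J h rho eps : R) : Prop :=
  eps <= h ^+ 2 / (2 * J) /\
  `| `|h| / J - Num.sqrt (h ^+ 2 / J ^+ 2 - 2 * eps / J) | < Num.sqrt rho.

(** Fixed energy ensemble <f>_MC^{eps,rho;N}, given the map
    E : m |-> <f>_MC^{m,rho;N}.  Outside the three cases of the definition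
    (i.e. for eps not allowed) the value is an irrelevant default 0. *)
Definition avgMC_energy {R : realType} (J h eps rho : R) (N : nat)
    (E : R -> R) : R :=
  let mp := m_plus J h eps in
  let mm := m_minus J h eps in
  if [&& eps < h ^+ 2 / (2 * J), mp ^+ 2 < rho & mm ^+ 2 < rho] then
    ZMC mp rho N / (ZMC mp rho N + ZMC mm rho N) * E mp +
    ZMC mm rho N / (ZMC mp rho N + ZMC mm rho N) * E mm
  else if [&& eps < h ^+ 2 / (2 * J),
              Num.min (mp ^+ 2) (mm ^+ 2) < rho &
              rho <= Num.max (mp ^+ 2) (mm ^+ 2)] then
    E (if `|mp| <= `|mm| then mp else mm)
  else if (eps == h ^+ 2 / (2 * J)) && (h ^+ 2 / J ^+ 2 < rho) then
    E (- (h / J))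
  else 0.

From HB Require Import structures.
From mathcomp Require Import all_boot all_order all_algebra.
From mathcomp Require Import all_classical all_reals all_analysis.
From mathcomp Require Import ring lra.
Import Order.TTheory GRing.Theory Num.Theory.
Local Open Scope classical_set_scope.
Local Open Scope ring_scope.

(* When both roots m_+ and m_- of the energy equation lie inside the ball
   m^2 < rho, the fixed energy ensemble is the mixture of the two
   microcanonical ensembles with weights proportional to Z_MC; it deviates
   from the ensemble at the root m of smaller modulus by at most 2K times the
   weight ratio Z_MC(m',rho;N) / Z_MC(m,rho;N) = q^((N-3)/2), where m' is the
   other root and q = (rho - m'^2) / (rho - m^2) < 1.  In all other allowed
   cases the fixed energy ensemble is the ensemble at m itself. *)

Lemma mixture_dev_le (R : realFieldType) (Z Z' E E' K : R) :
  0 < Z -> 0 <= Z' -> `|E| <= K -> `|E'| <= K ->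
  `|Z' / (Z + Z') * E' + Z / (Z + Z') * E - E| <= 2 * K * (Z' / Z).
Proof.
move=> Z_gt0 Z'_ge0 EK E'K.
have ZZ'_gt0 : 0 < Z + Z' by lra.
have -> : Z' / (Z + Z') * E' + Z / (Z + Z') * E - E = Z' / (Z + Z') * (E' - E).
  by field; rewrite gt_eqF.
have w_ge0 : 0 <= Z' / (Z + Z') by rewrite divr_ge0 // ltW.
have w_le : Z' / (Z + Z') <= Z' / Z.
  by rewrite ler_wpM2l // lef_pV2 ?posrE //; lra.
have dE : `|E' - E| <= 2 * K by apply: le_trans (ler_normB _ _) _; lra.
rewrite normrM ger0_norm //.
have := normr_ge0 (E' - E); nra.
Qed.

Lemma powR_divr (R : realType) (a b r : R) :
  0 <= a -> 0 <= b -> (a / b) `^ r = a `^ r / b `^ r.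
Proof.
move=> a_ge0 b_ge0.
by rewrite powRM ?invr_ge0 // -powR_inv1 // powRAC powR_inv1 ?powR_ge0.
Qed.

Lemma ZMC_ratio (R : realType) (m m' rho : R) (N : nat) :
  m ^+ 2 <= rho -> m' ^+ 2 <= rho ->
  ZMC m' rho N / ZMC m rho N = ((rho - m' ^+ 2) / (rho - m ^+ 2)) `^ ((N%:R - 3) / 2).
Proof. by move=> m_le m'_le; rewrite powR_divr ?subr_ge0. Qed.

Lemma expR_decay_of_powR_bound (R : realType) (d : nat -> R) (B q : R) (N0 : nat) :
  0 < q < 1 -> (forall N, (N0 <= N)%N -> `|d N| <= B * q `^ ((N%:R - 3) / 2)) ->
  exists c, 0 < c /\ exists C N1,
    forall N, (N1 <= N)%N -> `|d N| <= C * expR (- (c * N%:R)).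
Proof.
move=> /andP[q_gt0 q_lt1] d_le.
have ln_q_lt0 : ln q < 0 by apply: ln_lt0; rewrite q_gt0.
exists (- ln q / 2); split; first by lra.
exists (B * expR (- (3 / 2) * ln q)), N0 => N N_ge.
rewrite -mulrA -expRD /powR gt_eqF // in d_le *.
by congr (_ <= _ * expR _): (d_le N N_ge); field.
Qed.

Lemma avgMC_norm_le (R : realType) (N : nat) (mu : probability (RN R N) R)
    (f : RN R N -> R) (K : R) :
  mu.-integrable setT (EFin \o f) -> avgMC mu (fun phi => `|f phi|) <= K ->
  `|avgMC mu f| <= K.
Proof. by move=> f_int; apply: le_trans (le_normr_Rintegral _ f_int). Qed.

Section EnergyRoots.
Context {R : realType} (J h eps : R).

Local Notation s := (Num.sqrt (h ^+ 2 / J ^+ 2 - 2 * eps / J)).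

Definition m_near : R := - (h / J) + Num.sg h * s.
Definition m_far : R := - (h / J) - Num.sg h * s.

Lemma m_nearE : m_near = - Num.sg h * (`|h| / J - s).
Proof. by rewrite /m_near mulrBr mulNr mulrA -numEsg; ring. Qed.

Lemma m_farE : m_far = - Num.sg h * (`|h| / J + s).
Proof. by rewrite /m_far mulrDr mulNr mulrA -numEsg; ring. Qed.

Hypothesis h_neq0 : h != 0.

Lemma m_plus_minus_cases :
  (m_plus J h eps = m_near /\ m_minus J h eps = m_far) \/
  (m_plus J h eps = m_far /\ m_minus J h eps = m_near).
Proof.
rewrite /m_near /m_far /m_plus /m_minus.
have [h_lt0|h_gt0|h_eq0] := ltgtP h 0; last by move: h_neq0; rewrite h_eq0 eqxx.
- by right; rewrite ltr0_sg // !mulN1r opprK.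
- by left; rewrite gtr0_sg // !mul1r.
Qed.

Lemma sqr_m_near : m_near ^+ 2 = (`|h| / J - s) ^+ 2.
Proof. by rewrite m_nearE exprMn sqrrN sqr_sg h_neq0 mul1r. Qed.

Lemma sqr_m_far : m_far ^+ 2 = (`|h| / J + s) ^+ 2.
Proof. by rewrite m_farE exprMn sqrrN sqr_sg h_neq0 mul1r. Qed.

Hypothesis J_gt0 : 0 < J.

Lemma closer_root :
  (if `|m_plus J h eps| <= `|m_minus J h eps| then m_plus J h eps
   else m_minus J h eps) = m_near.
Proof.
have a_gt0 : 0 < `|h| / J by rewrite divr_gt0 ?normr_gt0.
have s_ge0 : 0 <= s := sqrtr_ge0 _.
have norm_sg : `|- Num.sg h| = 1 by rewrite normrN normr_sg h_neq0.
have near_le_far : `|m_near| <= `|m_far|.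
  rewrite m_nearE m_farE !normrM norm_sg !mul1r [X in _ <= X]ger0_norm; last lra.
  by apply: (le_trans (ler_normB _ _)); rewrite (ger0_norm (ltW a_gt0)) (ger0_norm s_ge0).
case: m_plus_minus_cases => -[-> ->]; first by rewrite near_le_far.
case: ifP => // far_le_near.
have s_eq0 : s = 0.
  move: far_le_near; rewrite m_nearE m_farE !normrM norm_sg !mul1r.
  set a := `|h| / J in a_gt0 *.
  by have [s_le|s_gt] := lerP s a; rewrite ?ger0_norm ?ltr0_norm; lra.
by rewrite /m_near /m_far s_eq0 mulr0 subr0 addr0.
Qed.

Lemma sqr_m_near_lt_rho (rho : R) :
  0 < rho -> `| `|h| / J - s | < Num.sqrt rho -> m_near ^+ 2 < rho.
Proof. by move=> rho_gt0 near_in; rewrite sqr_m_near -ltr_sqrt // sqrtr_sqr. Qed.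

Lemma sqr_m_near_lt_far : eps < h ^+ 2 / (2 * J) -> m_near ^+ 2 < m_far ^+ 2.
Proof.
move=> eps_lt; have a_gt0 : 0 < `|h| / J by rewrite divr_gt0 ?normr_gt0.
have s_gt0 : 0 < s.
  rewrite sqrtr_gt0 (_ : _ - _ = 2 / J * (h ^+ 2 / (2 * J) - eps)).
    by rewrite mulr_gt0 ?divr_gt0 ?subr_gt0.
  by field; rewrite gt_eqF.
rewrite sqr_m_near sqr_m_far; nra.
Qed.

Lemma avgMC_energy_mixture (rho : R) (N : nat) (E : R -> R) :
  eps < h ^+ 2 / (2 * J) -> m_near ^+ 2 < rho -> m_far ^+ 2 < rho ->
  avgMC_energy J h eps rho N E =
    ZMC m_far rho N / (ZMC m_near rho N + ZMC m_far rho N) * E m_far +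
    ZMC m_near rho N / (ZMC m_near rho N + ZMC m_far rho N) * E m_near.
Proof.
move=> eps_lt near_lt far_lt; rewrite /avgMC_energy /= eps_lt.
case: m_plus_minus_cases => -[-> ->]; rewrite near_lt far_lt /=.
- by rewrite addrC.
- by rewrite (addrC (ZMC m_far _ _)).
Qed.

Lemma avgMC_energy_single (rho : R) (N : nat) (E : R -> R) :
  eps <= h ^+ 2 / (2 * J) -> m_near ^+ 2 < rho ->
  ~~ ((eps < h ^+ 2 / (2 * J)) && (m_far ^+ 2 < rho)) ->
  avgMC_energy J h eps rho N E = E m_near.
Proof.
move=> eps_le near_lt; rewrite /avgMC_energy /=.
have [eps_lt|eps_ge] := ltP; last first.
  have eps_eq : eps = h ^+ 2 / (2 * J) by apply/le_anti; rewrite eps_le eps_ge.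
  have s_eq0 : s = 0.
    by rewrite eps_eq (_ : _ - _ = 0) ?sqrtr0 //; field; rewrite gt_eqF.
  have near_eq : m_near = - (h / J) by rewrite /m_near s_eq0 mulr0 addr0.
  have crit_lt : h ^+ 2 / J ^+ 2 < rho by rewrite -expr_div_n -sqrrN -near_eq.
  by rewrite /= [X in X == _]eps_eq eqxx crit_lt near_eq.
rewrite /= -leNgt => far_ge.
by case: m_plus_minus_cases => -[plusE minusE];
  rewrite -closer_root plusE minusE /= near_lt ltNge far_ge /=
          gt_min near_lt le_max far_ge ?orbT.
Qed.

Lemma avgMC_energy_mixture_dev_le (rho K : R) (N : nat) (E : R -> R) :
  eps < h ^+ 2 / (2 * J) -> m_near ^+ 2 < rho -> m_far ^+ 2 < rho ->
  `|E m_near| <= K -> `|E m_far| <= K ->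
  `|avgMC_energy J h eps rho N E - E m_near| <=
    2 * K * ((rho - m_far ^+ 2) / (rho - m_near ^+ 2)) `^ ((N%:R - 3) / 2).
Proof.
move=> eps_lt near_lt far_lt near_le far_le.
rewrite avgMC_energy_mixture // -(ZMC_ratio _ _ _ _ N (ltW near_lt) (ltW far_lt)).
by apply: mixture_dev_le => //; rewrite ?powR_gt0 ?subr_gt0 ?powR_ge0.
Qed.

End EnergyRoots.

Theorem theorem4p10 (R : realType) (J h rho eps K : R)
  (mu : forall N : nat, R -> probability (RN R N) R)
  (f : forall N : nat, RN R N -> R) :
  0 < J -> h != 0 -> 0 < rho -> allowed_energy J h rho eps -> 0 <= K ->
  (forall (N : nat) (m : R), (2 <= N)%N -> m ^+ 2 < rho -> is_uniform_MC N m rho (mu N m)) ->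
  (forall (N : nat) (m : R), (2 <= N)%N ->
     (m = m_plus J h eps \/ m = m_minus J h eps) -> m ^+ 2 < rho ->
     (mu N m).-integrable setT (EFin \o f N) /\
     avgMC (mu N m) (fun phi => `|f N phi|) <= K) ->
  let s := Num.sqrt (h ^+ 2 / J ^+ 2 - 2 * eps / J) in
  let m := - (h / J) + Num.sg h * s in
  let diff := fun N : nat =>
    avgMC_energy J h eps rho N (fun m' => avgMC (mu N m') (f N))
    - avgMC (mu N m) (f N) in
  (forall N : nat, (2 <= N)%N ->
     `| diff N | <=
     2 * K * powR `| (rho - (`|h| / J + s) ^+ 2) / (rho - (`|h| / J - s) ^+ 2) |
                  ((N%:R - 3) / 2)) /\
  (exists c : R, 0 < c /\ exists C : R, exists N0 : nat,
     forall N : nat, (N0 <= N)%N -> `| diff N | <= C * expR (- (c * N%:R))).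
Proof.
move=> J_gt0 h_neq0 rho_gt0 [eps_le near_in] K_ge0 _ f_int s m diff.
have roots := m_plus_minus_cases J h eps h_neq0.
have E_le N x : (2 <= N)%N -> x = m_near J h eps \/ x = m_far J h eps ->
    x ^+ 2 < rho -> `|avgMC (mu N x) (f N)| <= K.
  move=> N_ge x_root x_in; have x_pm : x = m_plus J h eps \/ x = m_minus J h eps.
    by case: roots => -[-> ->]; case: x_root; auto.
  by case: (f_int N x N_ge x_pm x_in); apply: avgMC_norm_le.
have near_lt : m_near J h eps ^+ 2 < rho by apply: sqr_m_near_lt_rho.
case: (boolP ((eps < h ^+ 2 / (2 * J)) && (m_far J h eps ^+ 2 < rho))); last first.
  move=> single; have diff0 N : diff N = 0.
    by rewrite /diff avgMC_energy_single // subrr.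
  split=> [N _|]; first by rewrite diff0 normr0 mulr_ge0 ?powR_ge0 ?mulr_ge0.
  by exists 1; split=> //; exists 0, 0%N => N _; rewrite diff0 normr0 mul0r.
move=> /andP[eps_lt far_lt].
set q := (rho - m_far J h eps ^+ 2) / (rho - m_near J h eps ^+ 2).
have q_gt0 : 0 < q by rewrite divr_gt0 ?subr_gt0.
have q_lt1 : q < 1.
  by rewrite ltr_pdivrMr ?subr_gt0 // mul1r ltrD2l ltrN2 sqr_m_near_lt_far.
have diff_le N : (2 <= N)%N -> `|diff N| <= 2 * K * q `^ ((N%:R - 3) / 2).
  by move=> N_ge; apply: avgMC_energy_mixture_dev_le => //; apply: E_le; auto.
split; last by apply: expR_decay_of_powR_bound diff_le; rewrite q_gt0.
by rewrite -sqr_m_near // -sqr_m_far // ger0_norm ?ltW.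
Qed.
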